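(* Let $(V,\varphi,\xi,\eta,g)$ with $n\ge2$, the space $\mathcal{F}$, the inner product $\langle\cdot,\cdot\rangle$, the group $G$, the subspace $W_1$ and the subspaces $\mathcal{F}_1,\mathcal{F}_2,\mathcal{F}_3$ be as in the context. Then $W_1=\mathcal{F}_1\oplus\mathcal{F}_2\oplus\mathcal{F}_3$, the summands are mutually orthogonal with respect to $\langle\cdot,\cdot\rangle$, and each is invariant under the action of $G$.
   Context: Let $V$ be a real vector space of dimension $2n+1$ with an endomorphism $\varphi$, a vector $\xi$ and a linear form $\eta$ such that $\varphi\xi=0$, $\eta\circ\varphi=0$, $\eta(\xi)=1$, $\varphi^2=\mathrm{id}-\eta\otimes\xi$, and such that $\varphi$ restricted to $\mathbb{D}=\ker\eta$ has eigenvalues $\pm1$ with eigenspaces of equal dimension $n$. Let $g$ be a nondegenerate symmetric bilinear form on $V$ with $g(\varphi X,\varphi Y)=-g(X,Y)+\eta(X)\eta(Y)$; then $\eta(X)=g(X,\xi)$. Write $hX=X-\eta(X)\xi$. Fix a basis $\{e_1,\dots,e_{2n}\}$ of $\mathbb{D}$, write $Y=Y^ie_i+\eta(Y)\xi$. Let $\mathcal{F}$ be the vector space of all $(0,3)$-tensors of the form $F(X,Y,Z)=Y^ig(\mathcal{A}_{e_i}X,Z)+\eta(Y)g(\mathcal{A}_\xi X,\varphi Z)$, where $\mathcal{A}_{e_i}:V\to V$ and $\mathcal{A}_\xi:V\to\mathbb{D}$ are linear maps satisfying for all $X$, $i,j$: $g(\mathcal{A}_{e_i}X,e_j)=-g(\mathcal{A}_{e_j}X,e_i)$;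 $\mathcal{A}_{\varphi e_i}X=-\varphi(\mathcal{A}_{e_i}X)-g(\mathcal{A}_\xi X,e_i)\xi$ (index extended linearly); $\eta(\mathcal{A}_{e_i}X)=-g(\mathcal{A}_\xi X,\varphi e_i)$; $\eta(\mathcal{A}_\xi X)=0$. Inner product: $\langle F_1,F_2\rangle=g^{aq}g^{br}g^{cs}F_1(f_a,f_b,f_c)F_2(f_q,f_r,f_s)$ for a basis $\{f_a\}$ of $V$, $(g^{ab})$ inverse of $(g(f_a,f_b))$. For $F\in\mathcal{F}$ put $\theta_F(X)=g^{ab}F(f_a,f_b,X)$. $G$ is the group of linear automorphisms $a$ of $V$ with $a\varphi=\varphi a$, $a\xi=\xi$, $\eta\circ a=\eta$, $g(aX,aY)=g(X,Y)$, acting by $(\lambda(a)F)(X,Y,Z)=F(a^{-1}X,a^{-1}Y,a^{-1}Z)$. Let $W_1=\{F\in\mathcal{F}:F(X,Y,Z)=F(hX,hY,hZ)\ \forall X,Y,Z\}$. On $W_1$ define $m_1(F)(X,Y,Z)=\tfrac12\{F(X,Y,Z)-F(\varphi X,Y,\varphi Z)\}$ and $m_2(F)(X,Y,Z)=\tfrac12\{F(X,Y,Z)+F(\varphi X,Y,\varphi Z)\}$; $W_{11}=\mathrm{Im}\,m_1$, $\mathcal{F}_3=\mathrm{Im}\,m_2$. On $W_{11}$ define $m_3(F)(X,Y,Z)=F(X,Y,Z)-\frac{1}{2(n-1)}\{g(X,\varphi Y)\theta_F(\varphi Z)-g(X,\varphi Z)\theta_F(\varphi Y)-g(\varphi X,\varphi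 Y)\theta_F(Z)+g(\varphi X,\varphi Z)\theta_F(Y)\}$; $\mathcal{F}_1=\ker m_3$ and $\mathcal{F}_2=\mathrm{Im}\,m_3$ (subspaces of $W_{11}$). *)

From HB Require Import structures.
From mathcomp Require Import all_boot all_order all_algebra.
From mathcomp Require Import reals.
Set Implicit Arguments. Unset Strict Implicit. Unset Printing Implicit Defensive.
Import Order.TTheory GRing.Theory Num.Theory.
Local Open Scope ring_scope.

(* Conventions: V = 'rV[R]_N with N = 2n+1 (row vectors); a linear map
   X |-> f X is represented by a matrix M acting on the right, f X = X *m M. *)

Section Defs.
Variable R : realType.

Definition bil {N} (Gm : 'M[R]_N) (X Y : 'rV[R]_N) : R := (X *m Gm *m Y^T) 0 0.
Definition lin {N} (c : 'cV[R]_N) (X : 'rV[R]_N) : R := (X *m c) 0 0.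
Definition hproj {N} (xi : 'rV[R]_N) (eta : 'cV[R]_N) (X : 'rV[R]_N) : 'rV[R]_N :=
  X - lin eta X *: xi.

Definition apc_struct (n : nat) (Phi : 'M[R]_(n.*2.+1)) (xi : 'rV[R]_(n.*2.+1))
    (eta : 'cV[R]_(n.*2.+1)) (Gm : 'M[R]_(n.*2.+1)) : Prop :=
  xi *m Phi = 0 /\
      (forall X, lin eta (X *m Phi) = 0) /\
      lin eta xi = 1 /\
      (forall X, X *m Phi *m Phi = X - lin eta X *: xi) /\
      \rank (eigenspace Phi 1 :&: kermx eta)%MS = n /\
      \rank (eigenspace Phi (-1) :&: kermx eta)%MS = n /\
      Gm^T = Gm /\
      Gm \in unitmx /\
      (forall X Y, bil Gm (X *m Phi) (Y *m Phi) = - bil Gm X Y + lin eta X * lin eta Y).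

Definition is_basis_D (n : nat) (E : 'M[R]_(n.*2, n.*2.+1)) (eta : 'cV[R]_(n.*2.+1)) : bool :=
  row_free E && (E == kermx eta)%MS.

Definition coords (n : nat) (E : 'M[R]_(n.*2, n.*2.+1)) (v : 'rV[R]_(n.*2.+1)) : 'rV[R]_(n.*2) :=
  v *m pinvmx E.

(* A_v := v^j A_{e_j} for v in D (the index extended linearly) *)
Definition Aext (n : nat) (E : 'M[R]_(n.*2, n.*2.+1)) (Ae : 'I_(n.*2) -> 'M[R]_(n.*2.+1))
    (v : 'rV[R]_(n.*2.+1)) : 'M[R]_(n.*2.+1) :=
  \sum_(j < n.*2) (coords E v) 0 j *: Ae j.

Definition tensor3 (N : nat) := 'rV[R]_N -> 'rV[R]_N -> 'rV[R]_N -> R.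

Definition teq {N} (T S : tensor3 N) : Prop := forall X Y Z, T X Y Z = S X Y Z.
Definition tadd3 {N} (T1 T2 T3 : tensor3 N) : tensor3 N :=
  fun X Y Z => T1 X Y Z + T2 X Y Z + T3 X Y Z.

Definition calF (n : nat) (Phi : 'M[R]_(n.*2.+1)) (xi : 'rV[R]_(n.*2.+1))
    (eta : 'cV[R]_(n.*2.+1)) (Gm : 'M[R]_(n.*2.+1)) (E : 'M[R]_(n.*2, n.*2.+1))
    (T : tensor3 n.*2.+1) : Prop :=
  exists (Ae : 'I_(n.*2) -> 'M[R]_(n.*2.+1)) (Axi : 'M[R]_(n.*2.+1)),
      (forall X : 'rV[R]_(n.*2.+1), (X *m Axi <= kermx eta)%MS) /\
      (forall X (i j : 'I_(n.*2)),
         bil Gm (X *m Ae i) (row j E) = - bil Gm (X *m Ae j) (row i E)) /\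
      (forall X (i : 'I_(n.*2)),
         X *m Aext E Ae (row i E *m Phi)
         = - (X *m Ae i *m Phi) - bil Gm (X *m Axi) (row i E) *: xi) /\
      (forall X (i : 'I_(n.*2)),
         lin eta (X *m Ae i) = - bil Gm (X *m Axi) (row i E *m Phi)) /\
      (forall X, lin eta (X *m Axi) = 0) /\
      (forall X Y Z,
         T X Y Z = \sum_(i < n.*2) (coords E (hproj xi eta Y)) 0 i * bil Gm (X *m Ae i) Z
                   + lin eta Y * bil Gm (X *m Axi) (Z *m Phi)).

Definition fb {N} (a : 'I_N) : 'rV[R]_N := delta_mx 0 a.

Definition tip {N} (Gm : 'M[R]_N) (T1 T2 : tensor3 N) : R :=
  \sum_(a < N) \sum_(b < N) \sum_(c < N) \sum_(q < N) \sum_(r < N) \sum_(s < N)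
    invmx Gm a q * invmx Gm b r * invmx Gm c s
    * T1 (fb a) (fb b) (fb c) * T2 (fb q) (fb r) (fb s).

Definition theta {N} (Gm : 'M[R]_N) (T : tensor3 N) (X : 'rV[R]_N) : R :=
  \sum_(a < N) \sum_(b < N) invmx Gm a b * T (fb a) (fb b) X.

Definition inG {N} (Phi : 'M[R]_N) (xi : 'rV[R]_N) (eta : 'cV[R]_N) (Gm : 'M[R]_N)
    (A : 'M[R]_N) : Prop :=
  [/\ A \in unitmx,
      A *m Phi = Phi *m A,
      xi *m A = xi,
      (forall X, lin eta (X *m A) = lin eta X) &
      (forall X Y, bil Gm (X *m A) (Y *m A) = bil Gm X Y)].

Definition gact {N} (A : 'M[R]_N) (T : tensor3 N) : tensor3 N :=
  fun X Y Z => T (X *m invmx A) (Y *m invmx A) (Z *m invmx A).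

Definition W1 (n : nat) (Phi : 'M[R]_(n.*2.+1)) (xi : 'rV[R]_(n.*2.+1))
    (eta : 'cV[R]_(n.*2.+1)) (Gm : 'M[R]_(n.*2.+1)) (E : 'M[R]_(n.*2, n.*2.+1))
    (T : tensor3 n.*2.+1) : Prop :=
  calF Phi xi eta Gm E T /\
  forall X Y Z, T X Y Z = T (hproj xi eta X) (hproj xi eta Y) (hproj xi eta Z).

Definition m1 {N} (Phi : 'M[R]_N) (T : tensor3 N) : tensor3 N :=
  fun X Y Z => 2^-1 * (T X Y Z - T (X *m Phi) Y (Z *m Phi)).
Definition m2 {N} (Phi : 'M[R]_N) (T : tensor3 N) : tensor3 N :=
  fun X Y Z => 2^-1 * (T X Y Z + T (X *m Phi) Y (Z *m Phi)).

Definition m3 (n : nat) (Phi Gm : 'M[R]_(n.*2.+1)) (T : tensor3 n.*2.+1) : tensor3 n.*2.+1 :=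
  fun X Y Z => T X Y Z - ((n.-1).*2)%:R^-1 *
    (bil Gm X (Y *m Phi) * theta Gm T (Z *m Phi)
     - bil Gm X (Z *m Phi) * theta Gm T (Y *m Phi)
     - bil Gm (X *m Phi) (Y *m Phi) * theta Gm T Z
     + bil Gm (X *m Phi) (Z *m Phi) * theta Gm T Y).

Definition W11 (n : nat) (Phi : 'M[R]_(n.*2.+1)) (xi : 'rV[R]_(n.*2.+1))
    (eta : 'cV[R]_(n.*2.+1)) (Gm : 'M[R]_(n.*2.+1)) (E : 'M[R]_(n.*2, n.*2.+1))
    (T : tensor3 n.*2.+1) : Prop :=
  exists S, W1 Phi xi eta Gm E S /\ teq T (m1 Phi S).
Definition F3 (n : nat) (Phi : 'M[R]_(n.*2.+1)) (xi : 'rV[R]_(n.*2.+1))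
    (eta : 'cV[R]_(n.*2.+1)) (Gm : 'M[R]_(n.*2.+1)) (E : 'M[R]_(n.*2, n.*2.+1))
    (T : tensor3 n.*2.+1) : Prop :=
  exists S, W1 Phi xi eta Gm E S /\ teq T (m2 Phi S).
Definition F1 (n : nat) (Phi : 'M[R]_(n.*2.+1)) (xi : 'rV[R]_(n.*2.+1))
    (eta : 'cV[R]_(n.*2.+1)) (Gm : 'M[R]_(n.*2.+1)) (E : 'M[R]_(n.*2, n.*2.+1))
    (T : tensor3 n.*2.+1) : Prop :=
  W11 Phi xi eta Gm E T /\ teq (m3 Phi Gm T) (fun _ _ _ => 0).
Definition F2 (n : nat) (Phi : 'M[R]_(n.*2.+1)) (xi : 'rV[R]_(n.*2.+1))
    (eta : 'cV[R]_(n.*2.+1)) (Gm : 'M[R]_(n.*2.+1)) (E : 'M[R]_(n.*2, n.*2.+1))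
    (T : tensor3 n.*2.+1) : Prop :=
  exists S, W11 Phi xi eta Gm E S /\ teq T (m3 Phi Gm S).

End Defs.

From HB Require Import structures.
From mathcomp Require Import all_boot all_order all_algebra.
From mathcomp Require Import reals.
From mathcomp Require Import ring zify lra.
Import Order.TTheory GRing.Theory Num.Theory.
Local Open Scope ring_scope.
Set Implicit Arguments. Unset Strict Implicit. Unset Printing Implicit Defensive.

Section ScalarForms.
Variables (K : pzRingType) (N : nat).
Implicit Types (f : 'rV[K]_N -> K) (X Y : 'rV[K]_N).

Lemma scalarfZD f a X Y : scalar f -> f (a *: X + Y) = a * f X + f Y.
Proof. exact. Qed.

Lemma scalarf0 f : scalar f -> f 0 = 0.
Proof.
move=> Lf; have := scalarfZD 1 0 0 Lf; rewrite scale1r addr0 mul1r => f00.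
by apply: (@addrI _ (f 0)); rewrite -f00 addr0.
Qed.

Lemma scalarfZ f a X : scalar f -> f (a *: X) = a * f X.
Proof. by move=> Lf; rewrite -[a *: X]addr0 scalarfZD // scalarf0 // addr0. Qed.

Lemma scalarfD f X Y : scalar f -> f (X + Y) = f X + f Y.
Proof. by move=> Lf; rewrite -{1}[X]scale1r scalarfZD // mul1r. Qed.

Lemma scalarfN f X : scalar f -> f (- X) = - f X.
Proof. by move=> Lf; rewrite -scaleN1r scalarfZ // mulN1r. Qed.

Lemma scalarfB f X Y : scalar f -> f (X - Y) = f X - f Y.
Proof. by move=> Lf; rewrite scalarfD // scalarfN. Qed.

Lemma scalarf_sum f (I : finType) (c : I -> K) (F : I -> 'rV[K]_N) :
  scalar f -> f (\sum_i c i *: F i) = \sum_i c i * f (F i).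
Proof.
move=> Lf; apply: (big_rec2 (fun x y => f y = x)); first exact: scalarf0.
by move=> i y1 y2 _ <-; rewrite scalarfZD.
Qed.

Lemma scalarf_delta f X : scalar f -> f X = \sum_a X 0 a * f (delta_mx 0 a).
Proof. by move=> Lf; rewrite {1}[X]row_sum_delta scalarf_sum. Qed.

Lemma eq_scalar f1 f2 : f1 =1 f2 -> scalar f1 -> scalar f2.
Proof. by move=> e Lf a X Y /=; rewrite -!e scalarfZD. Qed.

Lemma scalar_mulmx f (M : 'M[K]_N) : scalar f -> scalar (fun X => f (X *m M)).
Proof. by move=> Lf a X Y /=; rewrite mulmxDl -scalemxAl scalarfZD. Qed.

End ScalarForms.

Section ComScalarForms.
Variables (K : comPzRingType) (N : nat).
Implicit Types (f : 'rV[K]_N -> K).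

Lemma scalar_comb f1 f2 a b :
  scalar f1 -> scalar f2 -> scalar (fun X => a * f1 X + b * f2 X).
Proof. by move=> L1 L2 c X Y /=; rewrite !scalarfZD //; ring. Qed.

Lemma scalar_sum (I : finType) (F : I -> 'rV[K]_N -> K) :
  (forall i, scalar (F i)) -> scalar (fun X => \sum_i F i X).
Proof. by move=> LF c X Y /=; rewrite mulr_sumr -big_split; apply: eq_bigr => i _; exact: LF. Qed.

Lemma scalar_add f1 f2 : scalar f1 -> scalar f2 -> scalar (fun X => f1 X + f2 X).
Proof. by move=> L1 L2 c X Y /=; rewrite !scalarfZD //; ring. Qed.

Lemma scalar_mull f a : scalar f -> scalar (fun X => a * f X).
Proof. by move=> Lf c X Y /=; rewrite scalarfZD //; ring. Qed.

Lemma scalar_mulr f a : scalar f -> scalar (fun X => f X * a).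
Proof. by move=> Lf c X Y /=; rewrite scalarfZD //; ring. Qed.

End ComScalarForms.

Lemma bil_inj (R : realType) N (A B : 'M[R]_N) : bil A =2 bil B -> A = B.
Proof.
move=> eqAB; apply/matrixP => i j; have := eqAB (delta_mx 0 i) (delta_mx 0 j).
by rewrite /bil trmx_delta -!rowE -!colE !mxE.
Qed.

Section Contraction.
Variables (R : realType) (N : nat).
Local Notation fb := (@fb R N).
Implicit Types (C D M : 'M[R]_N).

Definition bilinear (W : 'rV[R]_N -> 'rV[R]_N -> R) :=
  (forall v, scalar (W ^~ v)) /\ (forall u, scalar (W u)).

Definition contr C (W : 'rV[R]_N -> 'rV[R]_N -> R) : R :=
  \sum_a \sum_b C a b * W (fb a) (fb b).

Lemma eq_contr C W1 W2 : (forall u v, W1 u v = W2 u v) -> contr C W1 = contr C W2.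
Proof. by move=> e; apply: eq_bigr => a _; apply: eq_bigr => b _; rewrite e. Qed.

Lemma contr_comb C W1 W2 x y :
  contr C (fun u v => x * W1 u v + y * W2 u v) = x * contr C W1 + y * contr C W2.
Proof.
rewrite /contr !mulr_sumr -big_split; apply: eq_bigr => a _ /=.
by rewrite !mulr_sumr -big_split; apply: eq_bigr => b _ /=; ring.
Qed.

Lemma contrD C W1 W2 :
  contr C (fun u v => W1 u v + W2 u v) = contr C W1 + contr C W2.
Proof.
rewrite /contr -big_split; apply: eq_bigr => a _ /=.
by rewrite -big_split; apply: eq_bigr => b _ /=; rewrite mulrDr.
Qed.

Lemma contrN C W : contr C (fun u v => - W u v) = - contr C W.
Proof.
rewrite /contr -sumrN; apply: eq_bigr => a _.
by rewrite -sumrN; apply: eq_bigr => b _; rewrite mulrN.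
Qed.

Lemma contrB C W1 W2 :
  contr C (fun u v => W1 u v - W2 u v) = contr C W1 - contr C W2.
Proof. by rewrite contrD contrN. Qed.

Lemma contrMr C W x : contr C (fun u v => W u v * x) = contr C W * x.
Proof.
rewrite /contr mulr_suml; apply: eq_bigr => a _.
by rewrite mulr_suml; apply: eq_bigr => b _; rewrite mulrA.
Qed.

Lemma contrNmx C W : contr (- C) W = - contr C W.
Proof. by rewrite -contrN /contr; do 2!(apply: eq_bigr => ? _); rewrite mxE mulNr mulrN. Qed.

Lemma exchange_big2 (F : 'I_N -> 'I_N -> 'I_N -> 'I_N -> R) :
  \sum_a \sum_b \sum_c \sum_d F a b c d = \sum_c \sum_d \sum_a \sum_b F a b c d.
Proof.
under eq_bigr => a _ do rewrite exchange_big.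
rewrite exchange_big; under eq_bigr => c _ do under eq_bigr => a _ do rewrite exchange_big.
by under eq_bigr => c _ do rewrite exchange_big.
Qed.

Lemma contrC C D (W : 'rV[R]_N -> 'rV[R]_N -> 'rV[R]_N -> 'rV[R]_N -> R) :
  contr C (fun u v => contr D (W u v)) = contr D (fun u' v' => contr C (fun u v => W u v u' v')).
Proof.
have expand C' D' (W' : 'I_N -> 'I_N -> 'I_N -> 'I_N -> R) :
    \sum_a \sum_b C' a b * (\sum_c \sum_d D' c d * W' a b c d)
    = \sum_a \sum_b \sum_c \sum_d C' a b * D' c d * W' a b c d.
  apply: eq_bigr => a _; apply: eq_bigr => b _; rewrite mulr_sumr.
  by apply: eq_bigr => c _; rewrite mulr_sumr; apply: eq_bigr => d _; rewrite mulrA.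
rewrite /contr !expand exchange_big2.
by do 4!(apply: eq_bigr => ? _); rewrite (mulrC (C _ _)).
Qed.

Lemma contr_mulmx C M M' W : bilinear W ->
  contr C (fun u v => W (u *m M) (v *m M')) = contr (M^T *m C *m M') W.
Proof.
case=> L1 L2; rewrite /contr.
transitivity (\sum_a \sum_b \sum_i \sum_j M a i * C a b * M' b j * W (fb i) (fb j)).
  apply: eq_bigr => a _; apply: eq_bigr => b _.
  rewrite (scalarf_delta _ (L1 _)) mulr_sumr; apply: eq_bigr => i _.
  rewrite (scalarf_delta _ (L2 _)) !mulr_sumr; apply: eq_bigr => j _.
  by rewrite /fb -!rowE !mxE; ring.
rewrite exchange_big2; apply: eq_bigr => i _; apply: eq_bigr => j _.
rewrite [in RHS]mxE; under [in RHS]eq_bigr => b _ do rewrite mxE mulr_suml.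
rewrite mulr_suml exchange_big; apply: eq_bigr => a _; rewrite mulr_suml.
by apply: eq_bigr => b _; rewrite !mxE.
Qed.

Lemma scalar_contr C (W : 'rV[R]_N -> 'rV[R]_N -> 'rV[R]_N -> R) :
  (forall u v, scalar (fun x => W x u v)) -> scalar (fun x => contr C (W x)).
Proof.
move=> LW; apply: scalar_sum => a; apply: scalar_sum => b.
by apply: scalar_mull; exact: LW.
Qed.

Lemma contr0 C : contr C (fun _ _ => 0) = 0.
Proof. by rewrite /contr big1 // => a _; rewrite big1 // => b _; rewrite mulr0. Qed.

Lemma bilinear_mul f1 f2 : scalar f1 -> scalar f2 -> bilinear (fun u v => f1 u * f2 v).
Proof. by move=> L1 L2; split=> w; [exact: scalar_mulr | exact: scalar_mull]. Qed.

Lemma thetaE (Gm : 'M[R]_N) (T : tensor3 R N) Z :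
  theta Gm T Z = contr (invmx Gm) (fun u v => T u v Z).
Proof. by []. Qed.

Lemma tipE (Gm : 'M[R]_N) (T1 T2 : tensor3 R N) : tip Gm T1 T2 =
  contr (invmx Gm) (fun a q => contr (invmx Gm) (fun b r =>
    contr (invmx Gm) (fun c s => T1 a b c * T2 q r s))).
Proof.
rewrite /tip /contr; apply: eq_bigr => a _.
under eq_bigr => b _ do rewrite exchange_big.
rewrite exchange_big; under eq_bigr => q _ do under eq_bigr => b _ do rewrite exchange_big.
apply: eq_bigr => q _; rewrite mulr_sumr; apply: eq_bigr => b _; rewrite mulr_sumr.
apply: eq_bigr => r _; rewrite !mulr_sumr; apply: eq_bigr => c _; rewrite !mulr_sumr.
by apply: eq_bigr => s _; ring.
Qed.

End Contraction.

Section Tensors.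
Variables (R : realType) (N : nat).
Implicit Types (T S : tensor3 R N) (Gm : 'M[R]_N).

Definition trilinear T :=
  [/\ forall Y Z, scalar (fun X => T X Y Z), forall X Z, scalar (fun Y => T X Y Z)
    & forall X Y, scalar (T X Y)].

Lemma eq_trilinear T S : teq T S -> trilinear T -> trilinear S.
Proof.
move=> e [L1 L2 L3]; split.
- by move=> Y Z; apply: eq_scalar (L1 Y Z) => X; rewrite e.
- by move=> X Z; apply: eq_scalar (L2 X Z) => Y; rewrite e.
- by move=> X Y; apply: eq_scalar (L3 X Y) => Z; rewrite e.
Qed.

Lemma trilinear_comb T S a b : trilinear T -> trilinear S ->
  trilinear (fun X Y Z => a * T X Y Z + b * S X Y Z).
Proof. by case=> [L1 L2 L3] [K1 K2 K3]; split=> *; apply: scalar_comb. Qed.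

Lemma trilinear_mulmx T M1 M2 M3 : trilinear T ->
  trilinear (fun X Y Z => T (X *m M1) (Y *m M2) (Z *m M3)).
Proof.
case=> L1 L2 L3; split=> [Y Z|X Z|X Y].
- exact: (scalar_mulmx _ (L1 _ _)).
- exact: (scalar_mulmx _ (L2 _ _)).
- exact: (scalar_mulmx _ (L3 _ _)).
Qed.

Lemma eq_theta Gm T S Z : teq T S -> theta Gm T Z = theta Gm S Z.
Proof. by move=> e; rewrite !thetaE; apply: eq_contr => u v; rewrite e. Qed.

Lemma theta_comb Gm T S a b Z :
  theta Gm (fun X Y Z => a * T X Y Z + b * S X Y Z) Z = a * theta Gm T Z + b * theta Gm S Z.
Proof. by rewrite !thetaE -contr_comb. Qed.

Lemma eq_tip Gm T1 T2 S1 S2 : teq T1 S1 -> teq T2 S2 -> tip Gm T1 T2 = tip Gm S1 S2.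
Proof. by move=> e1 e2; rewrite /tip; do 6!(apply: eq_bigr => ? _); rewrite e1 e2. Qed.

Lemma tip_combl Gm T1 T2 S a b :
  tip Gm (fun X Y Z => a * T1 X Y Z + b * T2 X Y Z) S = a * tip Gm T1 S + b * tip Gm T2 S.
Proof.
rewrite /tip; do 6!(rewrite !mulr_sumr -big_split; apply: eq_bigr => ? _ /=).
by ring.
Qed.

Lemma tipZl Gm T S a : tip Gm (fun X Y Z => a * T X Y Z) S = a * tip Gm T S.
Proof. by rewrite /tip; do 6!(rewrite mulr_sumr; apply: eq_bigr => ? _); ring. Qed.

Lemma tipNl Gm T S : tip Gm (fun X Y Z => - T X Y Z) S = - tip Gm T S.
Proof. by rewrite /tip; do 6!(rewrite -sumrN; apply: eq_bigr => ? _); rewrite mulrN mulNr. Qed.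

Lemma tipNr Gm T S : tip Gm T (fun X Y Z => - S X Y Z) = - tip Gm T S.
Proof. by rewrite /tip; do 6!(rewrite -sumrN; apply: eq_bigr => ? _); rewrite mulrN. Qed.

Lemma tip_swap23 Gm T S :
  tip Gm (fun X Y Z => T X Z Y) S = tip Gm T (fun X Y Z => S X Z Y).
Proof.
rewrite /tip; apply: eq_bigr => a _; rewrite exchange_big.
do 3!(apply: eq_bigr => ? _); rewrite exchange_big.
by do 2!(apply: eq_bigr => ? _); ring.
Qed.

End Tensors.

Lemma double_pred_neq0 (R : numDomainType) n : (2 <= n)%N -> ((n.-1).*2)%:R != 0 :> R.
Proof. by move=> n_ge2; rewrite pnatr_eq0 -muln2 muln_eq0 /=; lia. Qed.

Lemma natr_odd_double (R : pzSemiRingType) n : (2 <= n)%N ->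
  (n.*2.+1)%:R = ((n.-1).*2)%:R + 3 :> R.
Proof. by move=> n_ge2; rewrite -natrD; congr _%:R; lia. Qed.

Section Structure.
Variables (R : realType) (n : nat).
Local Notation N := n.*2.+1.
Variables (Phi : 'M[R]_N) (xi : 'rV[R]_N) (eta : 'cV[R]_N) (Gm : 'M[R]_N)
  (E : 'M[R]_(n.*2, N)).
Hypothesis Phi_xi : xi *m Phi = 0.
Hypothesis eta_Phi : forall X, lin eta (X *m Phi) = 0.
Hypothesis eta_xi : lin eta xi = 1.
Hypothesis Phi_sq : forall X, X *m Phi *m Phi = X - lin eta X *: xi.
Hypothesis Gm_sym : Gm^T = Gm.
Hypothesis Gm_unit : Gm \in unitmx.
Hypothesis g_Phi : forall X Y,
  bil Gm (X *m Phi) (Y *m Phi) = - bil Gm X Y + lin eta X * lin eta Y.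
Hypothesis E_ker : (E == kermx eta)%MS.
Hypothesis n_ge2 : (2 <= n)%N.

Local Notation g := (bil Gm).
Local Notation et := (lin eta).
Local Notation h := (hproj xi eta).
Local Notation fb := (@fb R N).
Local Notation Gi := (invmx Gm).
Implicit Types (X Y Z U W : 'rV[R]_N) (f t : 'rV[R]_N -> R).

Lemma bil_sym X Y : g X Y = g Y X.
Proof.
rewrite /bil [LHS](_ : _ = ((X *m Gm *m Y^T)^T) 0 0); last by rewrite [in RHS]mxE.
by rewrite !trmx_mul trmxK Gm_sym mulmxA.
Qed.

Lemma scalar_bill Y : scalar (g ^~ Y).
Proof. by move=> a X Z; rewrite /bil !mulmxDl -!scalemxAl !mxE. Qed.

Lemma scalar_bilr X : scalar (g X).
Proof. by move=> a Y Z; rewrite /bil linearD linearZ /= mulmxDr -scalemxAr !mxE. Qed.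

Lemma scalar_lin : scalar et.
Proof. by move=> a X Y; rewrite /lin mulmxDl -scalemxAl !mxE. Qed.

Lemma bil_xi X : g X xi = et X.
Proof.
have := g_Phi X xi; rewrite Phi_xi eta_xi mulr1 {1}/bil trmx0 mulmx0 mxE => /eqP.
by rewrite eq_sym addrC subr_eq0 => /eqP.
Qed.

Lemma bil_xil X : g xi X = et X.
Proof. by rewrite bil_sym bil_xi. Qed.

Lemma lin_h X : et (h X) = 0.
Proof. by rewrite /hproj scalarfB ?scalarfZ ?eta_xi ?mulr1 ?subrr //; apply: scalar_lin. Qed.

Lemma Phi_sqE X : X *m Phi *m Phi = h X.
Proof. exact: Phi_sq. Qed.

Lemma bil_skew X Y : g (X *m Phi) Y = - g X (Y *m Phi).
Proof.
have := g_Phi X (Y *m Phi); rewrite eta_Phi mulr0 addr0 Phi_sqE => <-.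
by rewrite /hproj scalarfB ?scalarfZ ?bil_xi ?eta_Phi ?mulr0 ?subr0 //; apply: scalar_bilr.
Qed.

Lemma h_Phi X : h X *m Phi = X *m Phi.
Proof. by rewrite /hproj mulmxBl -scalemxAl Phi_xi scaler0 subr0. Qed.

Lemma h_id X : h (h X) = h X.
Proof. by rewrite {1}/hproj lin_h scale0r subr0. Qed.

Lemma h_xi : h xi = 0.
Proof. by rewrite /hproj eta_xi scale1r subrr. Qed.

Lemma h_D X : et X = 0 -> h X = X.
Proof. by move=> e; rewrite /hproj e scale0r subr0. Qed.

Lemma hZD a X Y : h (a *: X + Y) = a *: h X + h Y.
Proof. by rewrite /hproj scalar_lin scalerDl scalerBr -scalerA addrACA -opprD. Qed.

Lemma bil_hl X Y : g (h X) Y = g X Y - et X * et Y.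
Proof.
by rewrite /hproj (scalarfB _ _ (scalar_bill Y)) (scalarfZ _ _ (scalar_bill Y)) bil_xil.
Qed.

Lemma bil_hr X Y : g X (h Y) = g X Y - et X * et Y.
Proof. by rewrite bil_sym bil_hl bil_sym mulrC. Qed.

Lemma Gm_PhiT : Gm *m Phi^T = - (Phi *m Gm).
Proof.
apply: bil_inj => X Y; transitivity (g X (Y *m Phi)).
  by rewrite /bil trmx_mul !mulmxA.
by rewrite -[LHS]opprK -bil_skew /bil mulmxN mulNmx [RHS]mxE !mulmxA.
Qed.

Lemma PhiT : Phi^T = - (Gi *m Phi *m Gm).
Proof. by rewrite -mulmxA -mulmxN -Gm_PhiT mulmxA mulVmx // mul1mx. Qed.

(* [Phi] is skew for [g], hence traceless *)
Lemma tr_Phi : \tr Phi = 0.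
Proof.
have := mxtrace_tr Phi; rewrite PhiT raddfN /= mxtrace_mulC mulmxA mulmxV // mul1mx.
by move/eqP; rewrite eq_sym -addr_eq0 -mulr2n mulrn_eq0 /= => /eqP.
Qed.

Local Notation gcontr := (contr Gi).

Lemma bil_fbr X j : g X (fb j) = (X *m Gm) 0 j.
Proof. by rewrite /bil /fb trmx_delta -colE mxE. Qed.

Lemma sum_bil_Gi W b : \sum_a g (fb a) W * Gi a b = W 0 b.
Proof.
transitivity ((W *m Gm *m Gi) 0 b); last by rewrite -mulmxA mulmxV // mulmx1.
by rewrite [RHS]mxE; apply: eq_bigr => a _; rewrite bil_sym bil_fbr.
Qed.

Lemma gcontr_bil W f : scalar f -> gcontr (fun u v => g u W * f v) = f W.
Proof.
move=> Lf; rewrite /contr exchange_big (scalarf_delta W Lf); apply: eq_bigr => b _.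
by rewrite -sum_bil_Gi mulr_suml; apply: eq_bigr => a _ /=; ring.
Qed.

Lemma gcontr_bilPhi W f : scalar f -> gcontr (fun u v => g (u *m Phi) W * f v) = - f (W *m Phi).
Proof.
move=> Lf; rewrite -(gcontr_bil _ Lf) -contrN.
by apply: eq_contr => u v; rewrite bil_skew mulNr.
Qed.

Lemma gcontr_bil1 : gcontr g = N%:R.
Proof.
rewrite /contr exchange_big.
transitivity (\sum_(b : 'I_N) (1 : R)); last by rewrite sumr_const card_ord.
apply: eq_bigr => b _; transitivity (fb b 0 b); last by rewrite mxE !eqxx.
by rewrite -sum_bil_Gi; apply: eq_bigr => a _; rewrite mulrC.
Qed.

Lemma gcontr_bilPhir : gcontr (fun u v => g u (v *m Phi)) = 0.
Proof.
rewrite /contr exchange_big -[RHS]tr_Phi; apply: eq_bigr => b _.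
transitivity ((fb b *m Phi) 0 b); last by rewrite /fb -rowE mxE.
by rewrite -sum_bil_Gi; apply: eq_bigr => a _; rewrite mulrC.
Qed.

Lemma gcontr_bilPhiPhi : gcontr (fun u v => g (u *m Phi) (v *m Phi)) = 1 - N%:R.
Proof.
transitivity (gcontr (fun u v => g u xi * et v - g u v)).
  by apply: eq_contr => u v; rewrite g_Phi bil_xi addrC.
by rewrite contrB gcontr_bil ?eta_xi ?gcontr_bil1 //; apply: scalar_lin.
Qed.

Lemma gcontr_Phi (W : 'rV[R]_N -> 'rV[R]_N -> R) : bilinear W ->
  gcontr (fun u v => W (u *m Phi) v) = - gcontr (fun u v => W u (v *m Phi)).
Proof.
move=> LW.
have -> : gcontr (fun u v => W u (v *m Phi)) = gcontr (fun u v => W (u *m 1%:M) (v *m Phi)).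
  by apply: eq_contr => u v; rewrite mulmx1.
have -> : gcontr (fun u v => W (u *m Phi) v) = gcontr (fun u v => W (u *m Phi) (v *m 1%:M)).
  by apply: eq_contr => u v; rewrite mulmx1.
by rewrite !contr_mulmx // trmx1 mul1mx mulmx1 PhiT mulNmx -!mulmxA mulmxV // mulmx1 contrNmx.
Qed.

Ltac simpl_g := repeat progress rewrite ?g_Phi ?Phi_sqE ?bil_hl ?bil_hr ?bil_skew
  ?eta_Phi ?lin_h ?h_Phi ?h_id.

Definition horizontal (T : tensor3 R N) := forall X Y Z, T X Y Z = T (h X) (h Y) (h Z).

Definition w1_tensor (T : tensor3 R N) :=
  [/\ trilinear T, horizontal T, forall X Y Z, T X Z Y = - T X Y Z
    & forall X Y Z, T X (Y *m Phi) Z = T X Y (Z *m Phi)].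

Definition twist (T : tensor3 R N) : tensor3 R N := fun X Y Z => T (X *m Phi) Y (Z *m Phi).

Implicit Types (T S : tensor3 R N).

Lemma horizontal_hl T X Y Z : horizontal T -> T (h X) Y Z = T X Y Z.
Proof. by move=> hT; rewrite [RHS]hT hT !h_id. Qed.

Lemma horizontal_hm T X Y Z : horizontal T -> T X (h Y) Z = T X Y Z.
Proof. by move=> hT; rewrite [RHS]hT hT !h_id. Qed.

Lemma horizontal_hr T X Y Z : horizontal T -> T X Y (h Z) = T X Y Z.
Proof. by move=> hT; rewrite [RHS]hT hT !h_id. Qed.

Lemma w1_xir T X Y : w1_tensor T -> T X Y xi = 0.
Proof. by case=> [[_ _ L3] hT _ _]; rewrite -horizontal_hr // h_xi scalarf0. Qed.

Lemma twistK T : w1_tensor T -> teq (twist (twist T)) T.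
Proof. by case=> _ hT _ _ X Y Z; rewrite /twist !Phi_sqE horizontal_hl // horizontal_hr. Qed.

Lemma eq_w1 T S : teq T S -> w1_tensor T -> w1_tensor S.
Proof.
move=> e [LT hT skT PhiT']; split; first exact: eq_trilinear LT.
- by move=> X Y Z; rewrite -!e hT.
- by move=> X Y Z; rewrite -!e skT.
- by move=> X Y Z; rewrite -!e PhiT'.
Qed.

Lemma w1_comb T S a b : w1_tensor T -> w1_tensor S ->
  w1_tensor (fun X Y Z => a * T X Y Z + b * S X Y Z).
Proof.
case=> [LT hT skT PhiT'] [LS hS skS PhiS]; split; first exact: trilinear_comb.
- by move=> X Y Z; rewrite hT hS.
- by move=> X Y Z; rewrite skT skS; ring.
- by move=> X Y Z; rewrite PhiT' PhiS.
Qed.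

Lemma w1_twist T : w1_tensor T -> w1_tensor (twist T).
Proof.
case=> [LT hT skT PhiT']; split.
- by apply: eq_trilinear (trilinear_mulmx Phi 1%:M Phi LT) => X Y Z; rewrite mulmx1.
- by move=> X Y Z; rewrite /twist !h_Phi horizontal_hm.
- by move=> X Y Z; rewrite /twist skT PhiT'.
- by move=> X Y Z; rewrite /twist PhiT'.
Qed.

Lemma w1_m1 T : w1_tensor T -> w1_tensor (m1 Phi T).
Proof.
move=> wT; apply: eq_w1 (w1_comb (2^-1) (- 2^-1) wT (w1_twist wT)) => X Y Z.
by rewrite /m1 /twist; ring.
Qed.

Lemma w1_m2 T : w1_tensor T -> w1_tensor (m2 Phi T).
Proof.
move=> wT; apply: eq_w1 (w1_comb (2^-1) (2^-1) wT (w1_twist wT)) => X Y Z.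
by rewrite /m2 /twist; ring.
Qed.

Lemma twist_m1 T : w1_tensor T -> teq (twist (m1 Phi T)) (fun X Y Z => - m1 Phi T X Y Z).
Proof.
move=> wT X Y Z; have := twistK wT X Y Z.
by rewrite /twist /m1 => ->; ring.
Qed.

Lemma twist_m2 T : w1_tensor T -> teq (twist (m2 Phi T)) (m2 Phi T).
Proof.
move=> wT X Y Z; have := twistK wT X Y Z.
by rewrite /twist /m2 => ->; ring.
Qed.

Definition horizontal_form t := scalar t /\ t xi = 0.

Lemma horizontal_form_h t X : horizontal_form t -> t (h X) = t X.
Proof. by case=> Lt t_xi; rewrite /hproj scalarfB // scalarfZ // t_xi mulr0 subr0. Qed.

Definition trace_tensor t : tensor3 R N := fun X Y Z =>
  g X (Y *m Phi) * t (Z *m Phi) - g X (Z *m Phi) * t (Y *m Phi)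
  - g (X *m Phi) (Y *m Phi) * t Z + g (X *m Phi) (Z *m Phi) * t Y.

Lemma w1_trace_tensor t : horizontal_form t -> w1_tensor (trace_tensor t).
Proof.
move=> tf; have [Lt _] := tf; split; first split.
- move=> Y Z c X1 X2 /=; rewrite /trace_tensor mulmxDl -scalemxAl.
  by rewrite !(scalarfZD _ _ _ (scalar_bill _)); ring.
- move=> X Z c Y1 Y2 /=; rewrite /trace_tensor mulmxDl -scalemxAl.
  by rewrite !(scalarfZD _ _ _ (scalar_bilr _)) !(scalarfZD _ _ _ Lt); ring.
- move=> X Y c Z1 Z2 /=; rewrite /trace_tensor mulmxDl -scalemxAl.
  by rewrite !(scalarfZD _ _ _ (scalar_bilr _)) !(scalarfZD _ _ _ Lt); ring.
- by move=> X Y Z; rewrite /trace_tensor; simpl_g; rewrite !horizontal_form_h //; ring.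
- by move=> X Y Z; rewrite /trace_tensor; ring.
- by move=> X Y Z; rewrite /trace_tensor; simpl_g; rewrite !horizontal_form_h //; ring.
Qed.

Lemma twist_trace_tensor t : horizontal_form t ->
  teq (twist (trace_tensor t)) (fun X Y Z => - trace_tensor t X Y Z).
Proof.
by move=> tf X Y Z; rewrite /twist /trace_tensor; simpl_g; rewrite !horizontal_form_h //; ring.
Qed.

Lemma eq_trace_tensor t1 t2 : t1 =1 t2 -> teq (trace_tensor t1) (trace_tensor t2).
Proof. by move=> e X Y Z; rewrite /trace_tensor !e. Qed.

Lemma theta_trace_tensor t Z : horizontal_form t ->
  theta Gm (trace_tensor t) Z = ((n.-1).*2)%:R * t Z.
Proof.
move=> tf; have [Lt _] := tf.
rewrite thetaE /trace_tensor contrD !contrB !contrMr gcontr_bilPhir gcontr_bilPhiPhi.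
rewrite gcontr_bil ?gcontr_bilPhi ?Phi_sqE ?horizontal_form_h //; last exact: scalar_mulmx.
by rewrite natr_odd_double //; ring.
Qed.

Lemma horizontal_form_theta T : w1_tensor T -> horizontal_form (theta Gm T).
Proof.
move=> wT; have [[_ _ L3] _ _ _] := wT; split.
  exact: (@scalar_contr _ _ Gi (fun x u v => T u v x) (fun u v => L3 u v)).
by rewrite thetaE -(contr0 Gi); apply: eq_contr => u v; rewrite w1_xir.
Qed.

Lemma m3E T X Y Z :
  m3 Phi Gm T X Y Z = T X Y Z - ((n.-1).*2)%:R^-1 * trace_tensor (theta Gm T) X Y Z.
Proof. by []. Qed.

Lemma m3_coefK : ((n.-1).*2)%:R^-1 * ((n.-1).*2)%:R = 1 :> R.
Proof. exact/mulVf/double_pred_neq0. Qed.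

Lemma w1_m3 T : w1_tensor T -> w1_tensor (m3 Phi Gm T).
Proof.
move=> wT; have tT := w1_trace_tensor (horizontal_form_theta wT).
by apply: eq_w1 (w1_comb 1 (- ((n.-1).*2)%:R^-1) wT tT) => X Y Z; rewrite m3E; ring.
Qed.

Lemma theta_m3 T Z : w1_tensor T -> theta Gm (m3 Phi Gm T) Z = 0.
Proof.
move=> wT; rewrite (@eq_theta _ _ _ _ (fun X Y Z => 1 * T X Y Z
    + (- ((n.-1).*2)%:R^-1) * trace_tensor (theta Gm T) X Y Z)); last first.
  by move=> X Y Z'; rewrite m3E; ring.
rewrite theta_comb theta_trace_tensor; last exact: horizontal_form_theta.
by rewrite mulNr mulrA m3_coefK; ring.
Qed.

Lemma tip_twist A B : trilinear A -> trilinear B -> tip Gm (twist A) B = tip Gm A (twist B).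
Proof.
case=> LA1 _ LA3 [LB1 _ LB3]; rewrite !tipE /twist.
pose F u v := gcontr (fun b r => gcontr (fun c s => A u b c * B v r (s *m Phi))).
have bilF : bilinear F.
  split=> [v|u].
  - apply: (@scalar_contr _ _ Gi (fun u b r => gcontr (fun c s => A u b c * _))) => b r.
    apply: (@scalar_contr _ _ Gi (fun u c s => A u b c * _)) => c s.
    exact: (scalar_mulr _ (LA1 b c)).
  - apply: (@scalar_contr _ _ Gi (fun v b r => gcontr (fun c s => _ * B v r (s *m Phi)))) => b r.
    apply: (@scalar_contr _ _ Gi (fun v c s => _ * B v r (s *m Phi))) => c s.
    exact: (scalar_mull _ (LB1 r _)).
transitivity (gcontr (fun a q => - F (a *m Phi) q)).
  apply: eq_contr => a q; rewrite -contrN; apply: eq_contr => b r.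
  exact: (gcontr_Phi (bilinear_mul (LA3 _ _) (LB3 _ _))).
by rewrite contrN gcontr_Phi // opprK.
Qed.

Lemma tip_twist_eigen A B : trilinear A -> trilinear B ->
  teq (twist A) (fun X Y Z => - A X Y Z) -> teq (twist B) B -> tip Gm A B = 0.
Proof.
move=> LA LB tA tB.
have e1 : tip Gm (twist A) B = - tip Gm A B by rewrite -tipNl; apply: eq_tip.
have e2 : tip Gm A (twist B) = tip Gm A B by apply: eq_tip.
have := tip_twist LA LB; rewrite e1 e2.
by move/eqP; rewrite eq_sym -addr_eq0 -mulr2n mulrn_eq0 /= => /eqP.
Qed.

Section TraceOrthogonality.
Variables (t : 'rV[R]_N -> R) (S : tensor3 R N).
Hypotheses (tf : horizontal_form t) (wS : w1_tensor S).
Hypothesis tS : teq (twist S) (fun X Y Z => - S X Y Z).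
Hypothesis thS : forall Z, theta Gm S Z = 0.

Lemma tip_trace_half :
  tip Gm (fun X Y Z => g X (Y *m Phi) * t (Z *m Phi) - g (X *m Phi) (Y *m Phi) * t Z) S = 0.
Proof.
have [[LS1 _ _] hS _ _] := wS.
rewrite tipE contrC; under eq_contr => b r do rewrite contrC.
rewrite contrC -[RHS](contr0 Gi); apply: eq_contr => c s.
transitivity (gcontr (fun b r => - t (c *m Phi) * S b r (s *m Phi) + t c * S b r s)).
  apply: eq_contr => b r.
  transitivity (gcontr (fun a q => g a (b *m Phi) * (t (c *m Phi) * S q r s)
                                 - g (a *m Phi) (b *m Phi) * (t c * S q r s))).
    by apply: eq_contr => a q; ring.
  rewrite contrB gcontr_bil ?gcontr_bilPhi ?Phi_sqE ?horizontal_hl //;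
    try exact: (scalar_mull _ (LS1 r s)).
  have := tS b r (s *m Phi); rewrite /twist Phi_sqE horizontal_hr // => ->.
  by ring.
by rewrite contr_comb -!thetaE !thS; ring.
Qed.

Lemma tip_trace_tensor : tip Gm (trace_tensor t) S = 0.
Proof.
have [_ _ skS _] := wS.
pose half := fun X Y Z => g X (Y *m Phi) * t (Z *m Phi) - g (X *m Phi) (Y *m Phi) * t Z.
transitivity (1 * tip Gm half S + (-1) * tip Gm (fun X Y Z => half X Z Y) S).
  by rewrite -tip_combl; apply: eq_tip => // X Y Z; rewrite /half /trace_tensor; ring.
have -> : tip Gm (fun X Y Z => half X Z Y) S = - tip Gm half S.
  by rewrite tip_swap23 -tipNr; apply: eq_tip => // X Y Z; rewrite skS.
by rewrite tip_trace_half; ring.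
Qed.

End TraceOrthogonality.

Lemma E_eta : E *m eta = 0.
Proof. by apply/sub_kermxP; case/andP: E_ker. Qed.

Lemma lin_row_E j : et (row j E) = 0.
Proof. by rewrite /lin -row_mul E_eta row0 mxE. Qed.

Lemma coords_expand v : et v = 0 -> v = \sum_j coords E v 0 j *: row j E.
Proof.
move=> ev; have kerE : (kermx eta <= E)%MS by case/andP: E_ker.
rewrite -mulmx_sum_row /coords mulmxKpV //; apply: submx_trans kerE; apply/sub_kermxP.
by apply/matrixP => i j; rewrite !ord1 [RHS]mxE.
Qed.

Lemma scalar_coords i : scalar (fun v => coords E v 0 i).
Proof. by move=> a u v; rewrite /coords mulmxDl -scalemxAl !mxE. Qed.

Lemma scalar_h f : scalar f -> scalar (fun X => f (h X)).
Proof. by move=> Lf a X Y /=; rewrite hZD scalarfZD. Qed.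

Lemma bil_injl U V : (forall Z, g U Z = g V Z) -> U = V.
Proof.
move=> eqUV; have : U *m Gm = V *m Gm by apply/rowP => j; rewrite -!bil_fbr eqUV.
by move/(congr1 (mulmx^~ Gi)); rewrite -!mulmxA mulmxV // !mulmx1.
Qed.

Section CalFToW1.
Variables (T : tensor3 R N) (Ae : 'I_(n.*2) -> 'M[R]_N) (Axi : 'M[R]_N).
Hypothesis Ae_skew : forall X (i j : 'I_(n.*2)),
  g (X *m Ae i) (row j E) = - g (X *m Ae j) (row i E).
Hypothesis Ae_Phi : forall X (i : 'I_(n.*2)),
  X *m Aext E Ae (row i E *m Phi) = - (X *m Ae i *m Phi) - g (X *m Axi) (row i E) *: xi.
Hypothesis T_def : forall X Y Z,
  T X Y Z = \sum_(i < n.*2) coords E (h Y) 0 i * g (X *m Ae i) Z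
            + et Y * g (X *m Axi) (Z *m Phi).
Hypothesis hT : horizontal T.

Lemma calF_D X u Z : et u = 0 -> T X u Z = \sum_i coords E u 0 i * g (X *m Ae i) Z.
Proof. by move=> eu; rewrite T_def h_D // eu mul0r addr0. Qed.

Lemma calF_DD X u v : et u = 0 -> et v = 0 ->
  T X u v = \sum_i \sum_j coords E u 0 i * coords E v 0 j * g (X *m Ae i) (row j E).
Proof.
move=> eu ev; rewrite calF_D //; apply: eq_bigr => i _.
rewrite {1}(coords_expand ev) (scalarf_sum _ _ (scalar_bilr _)) mulr_sumr.
by apply: eq_bigr => j _; ring.
Qed.

Lemma bil_Aext X w Z : g (X *m Aext E Ae w) Z = \sum_i coords E w 0 i * g (X *m Ae i) Z.
Proof.
rewrite /Aext mulmx_sumr; under eq_bigr => i _ do rewrite -scalemxAr.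
by rewrite (scalarf_sum _ _ (scalar_bill Z)).
Qed.

Lemma trilinear_calF : trilinear T.
Proof.
split=> [Y Z|X Z|X Y]; apply: eq_scalar (fun _ => esym (T_def _ _ _)) _; apply: scalar_add.
- by apply: scalar_sum => i; exact: (scalar_mull _ (scalar_mulmx _ (scalar_bill Z))).
- exact: (scalar_mull _ (scalar_mulmx _ (scalar_bill _))).
- by apply: scalar_sum => i; exact: (scalar_mulr _ (scalar_h (scalar_coords i))).
- exact: (scalar_mulr _ scalar_lin).
- by apply: scalar_sum => i; exact: (scalar_mull _ (scalar_bilr _)).
- exact: (scalar_mull _ (scalar_mulmx _ (scalar_bilr _))).
Qed.

Lemma calF_skew X Y Z : T X Z Y = - T X Y Z.
Proof.
rewrite -horizontal_hm // -horizontal_hr // -[in RHS]horizontal_hm // -[in RHS]horizontal_hr //.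
rewrite !calF_DD ?lin_h // exchange_big -sumrN; apply: eq_bigr => i _.
by rewrite -sumrN; apply: eq_bigr => j _; rewrite Ae_skew; ring.
Qed.

Lemma calF_Phi X Y Z : T X (Y *m Phi) Z = T X Y (Z *m Phi).
Proof.
rewrite -h_Phi -horizontal_hr // -[in RHS]h_Phi -[in RHS]horizontal_hm //.
move: (h Y) (h Z) (lin_h Y) (lin_h Z) => u v eu ev.
have Lw : scalar (fun w => g (X *m Aext E Ae w) v).
  apply: eq_scalar (fun w => esym (bil_Aext X w v)) _.
  by apply: scalar_sum => i; exact: (scalar_mulr _ (scalar_coords i)).
rewrite calF_D ?eta_Phi // calF_D // -bil_Aext {1}(coords_expand eu) mulmx_suml.
under eq_bigr => j _ do rewrite -scalemxAl.
rewrite (scalarf_sum _ _ Lw); apply: eq_bigr => j _; congr (_ * _).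
rewrite Ae_Phi (scalarfB _ _ (scalar_bill v)) (scalarfN _ (scalar_bill v)).
by rewrite (scalarfZ _ _ (scalar_bill v)) bil_xil ev mulr0 subr0 bil_skew opprK.
Qed.

End CalFToW1.

Section W1ToCalF.
Variable T : tensor3 R N.
Hypothesis wT : w1_tensor T.

(* the endomorphisms [A_{e_i}] of a tensor of [W_1], read off [g(A_{e_i} X, Z) = T(X, e_i, Z)] *)
Definition Ae_of (i : 'I_(n.*2)) : 'M[R]_N :=
  (\matrix_(a, s) T (fb a) (row i E) (fb s)) *m Gi.

Lemma bil_Ae_of X i Z : g (X *m Ae_of i) Z = T X (row i E) Z.
Proof.
have [[L1 _ L3] _ _ _] := wT.
rewrite /bil /Ae_of mulmxA -(mulmxA _ Gi) mulVmx // mulmx1 mxE.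
rewrite (scalarf_delta _ (L3 _ _)); apply: eq_bigr => s _.
rewrite [_^T _ _]mxE mulrC; congr (_ * _).
by rewrite mxE (scalarf_delta _ (L1 _ _)); apply: eq_bigr => a _; rewrite mxE.
Qed.

Lemma bil_Aext_of X w Z : et w = 0 -> g (X *m Aext E Ae_of w) Z = T X w Z.
Proof.
have [[_ L2 _] _ _ _] := wT.
move=> ew; rewrite bil_Aext {2}(coords_expand ew) (scalarf_sum _ _ (L2 _ _)).
by apply: eq_bigr => i _; rewrite bil_Ae_of.
Qed.

Lemma calF_of_w1 : calF Phi xi eta Gm E T.
Proof.
have [[_ L2 _] hT skT PhiT'] := wT.
exists Ae_of, 0; do !split.
- by move=> X; rewrite mulmx0 sub0mx.
- by move=> X i j; rewrite !bil_Ae_of skT.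
- move=> X i; apply: bil_injl => Z.
  rewrite bil_Aext_of ?eta_Phi // mulmx0 (scalarf0 (scalar_bill _)) scale0r subr0.
  by rewrite (scalarfN _ (scalar_bill Z)) bil_skew opprK bil_Ae_of PhiT'.
- by move=> X i; rewrite mulmx0 (scalarf0 (scalar_bill _)) oppr0 -bil_xi bil_Ae_of w1_xir.
- by move=> X; rewrite mulmx0 (scalarf0 scalar_lin).
- move=> X Y Z; rewrite mulmx0 (scalarf0 (scalar_bill _)) mulr0 addr0.
  under eq_bigr => i _ do rewrite bil_Ae_of.
  by rewrite -(scalarf_sum _ _ (L2 X Z)) -coords_expand ?lin_h // horizontal_hm.
Qed.

End W1ToCalF.

Lemma W1P T : W1 Phi xi eta Gm E T <-> w1_tensor T.
Proof.
split=> [[[Ae [Axi [_ [Ae_skew [Ae_Phi [_ [_ T_def]]]]]]] hT] | wT].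
  split; [exact: trilinear_calF T_def | exact: hT | exact: calF_skew | exact: calF_Phi].
by split; [exact: calF_of_w1 | case: wT].
Qed.

Section GroupAction.
Variable A : 'M[R]_N.
Hypothesis A_G : inG Phi xi eta Gm A.
Local Notation B := (invmx A).

Lemma unit_A : A \in unitmx.
Proof. by case: A_G. Qed.

Lemma invmx_Phi X : X *m Phi *m B = X *m B *m Phi.
Proof.
have [_ APhi _ _ _] := A_G.
have PhiB : Phi *m B = B *m Phi.
  transitivity (B *m (A *m Phi) *m B); first by rewrite mulmxA mulVmx ?unit_A // mul1mx.
  by rewrite APhi mulmxA -mulmxA mulmxV ?unit_A // mulmx1.
by rewrite -!mulmxA PhiB.
Qed.

Lemma xi_invmx : xi *m B = xi.
Proof. by have [_ _ xiA _ _] := A_G; rewrite -{1}xiA mulmxK // unit_A. Qed.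

Lemma lin_invmx X : et (X *m B) = et X.
Proof. by have [_ _ _ etaA _] := A_G; rewrite -[in RHS](mulmxKV unit_A X) etaA. Qed.

Lemma bil_invmx X Y : g (X *m B) (Y *m B) = g X Y.
Proof.
have [_ _ _ _ gA] := A_G.
by rewrite -[in RHS](mulmxKV unit_A X) -[in RHS](mulmxKV unit_A Y) gA.
Qed.

Lemma h_invmx X : h (X *m B) = h X *m B.
Proof. by rewrite /hproj lin_invmx mulmxBl -scalemxAl xi_invmx. Qed.

Lemma invmx_Gi : B^T *m Gi *m B = Gi.
Proof.
have [_ _ _ _ gA] := A_G.
have AGm : A *m Gm *m A^T = Gm.
  by apply: bil_inj => X Y; rewrite /bil !mulmxA -(mulmxA _ A^T) -trmx_mul; exact: gA.
have BGm : B *m Gm = Gm *m A^T by rewrite -{1}AGm !mulmxA mulVmx ?unit_A // mul1mx.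
have e : B^T *m Gi *m B *m Gm = 1%:M.
  rewrite -mulmxA BGm mulmxA -(mulmxA _ Gi) mulVmx // mulmx1 -trmx_mul.
  by rewrite mulmxV ?unit_A // trmx1.
by rewrite -[LHS]mulmx1 -(mulmxV Gm_unit) mulmxA e mul1mx.
Qed.

Lemma w1_gact T : w1_tensor T -> w1_tensor (gact A T).
Proof.
case=> [LT hT skT PhiT']; split; first exact: trilinear_mulmx.
- by move=> X Y Z; rewrite /gact -!h_invmx -hT.
- by move=> X Y Z; rewrite /gact skT.
- by move=> X Y Z; rewrite /gact !invmx_Phi PhiT'.
Qed.

Lemma theta_gact T Z : trilinear T -> theta Gm (gact A T) Z = theta Gm T (Z *m B).
Proof.
case=> L1 L2 _; rewrite !thetaE /gact.
by rewrite (contr_mulmx _ _ _ (W := fun u v => T u v (Z *m B))) ?invmx_Gi.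
Qed.

Lemma m1_gact T : teq (m1 Phi (gact A T)) (gact A (m1 Phi T)).
Proof. by move=> X Y Z; rewrite /m1 /gact !invmx_Phi. Qed.

Lemma m2_gact T : teq (m2 Phi (gact A T)) (gact A (m2 Phi T)).
Proof. by move=> X Y Z; rewrite /m2 /gact !invmx_Phi. Qed.

Lemma m3_gact T : trilinear T -> teq (m3 Phi Gm (gact A T)) (gact A (m3 Phi Gm T)).
Proof.
move=> LT X Y Z; rewrite m3E [in RHS]/gact m3E; congr (_ - _ * _).
by rewrite /trace_tensor -!invmx_Phi !bil_invmx !theta_gact // !invmx_Phi.
Qed.

End GroupAction.

Local Notation kappa := (((n.-1).*2)%:R^-1 : R).
Local Notation P1 := (F1 Phi xi eta Gm E).
Local Notation P2 := (F2 Phi xi eta Gm E).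
Local Notation P3 := (F3 Phi xi eta Gm E).
Local Notation P11 := (W11 Phi xi eta Gm E).

Lemma W11_props T : P11 T -> w1_tensor T /\ teq (twist T) (fun X Y Z => - T X Y Z).
Proof.
case=> S [/W1P wS e]; split; first exact: eq_w1 (w1_m1 wS).
by move=> X Y Z; rewrite /twist !e; apply: twist_m1.
Qed.

Lemma W11_of_twist T : w1_tensor T -> teq (twist T) (fun X Y Z => - T X Y Z) -> P11 T.
Proof.
move=> wT tT; exists T; split; first exact/W1P.
by move=> X Y Z; rewrite /m1; have := tT X Y Z; rewrite /twist => ->; field.
Qed.

Lemma F3_props T : P3 T -> w1_tensor T /\ teq (twist T) T.
Proof.
case=> S [/W1P wS e]; split; first exact: eq_w1 (w1_m2 wS).
by move=> X Y Z; rewrite /twist !e; apply: twist_m2.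
Qed.

Lemma F1_trace T : P1 T -> teq T (fun X Y Z => kappa * trace_tensor (theta Gm T) X Y Z).
Proof. by case=> _ e X Y Z; apply/eqP; rewrite -subr_eq0; apply/eqP/e. Qed.

Lemma F2_props T : P2 T ->
  [/\ w1_tensor T, teq (twist T) (fun X Y Z => - T X Y Z) & forall Z, theta Gm T Z = 0].
Proof.
case=> S [/W11_props [wS tS] e]; have tf := horizontal_form_theta wS; split.
- exact: eq_w1 (w1_m3 wS).
- move=> X Y Z; rewrite /twist !e !m3E.
  have := tS X Y Z; have := twist_trace_tensor tf X Y Z; rewrite /twist => -> ->; ring.
- by move=> Z; rewrite (eq_theta Gm Z e) theta_m3.
Qed.

Lemma F1_props T : P1 T -> w1_tensor T /\ teq (twist T) (fun X Y Z => - T X Y Z).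
Proof. by case=> /W11_props. Qed.

Lemma W1_decompose T : W1 Phi xi eta Gm E T <->
  exists T1 T2 T3, [/\ P1 T1, P2 T2, P3 T3 & teq T (tadd3 T1 T2 T3)].
Proof.
split=> [/W1P wT | [T1 [T2 [T3 [/F1_props [w1 _] /F2_props [w2 _ _] /F3_props [w3 _] e]]]]];
  last first.
  apply/W1P; apply: eq_w1 (w1_comb 1 1 (w1_comb 1 1 w1 w2) w3) => X Y Z.
  by rewrite e /tadd3; ring.
pose U := m1 Phi T; have wU : w1_tensor U := w1_m1 wT.
have tf := horizontal_form_theta wU.
pose T1 X Y Z := kappa * trace_tensor (theta Gm U) X Y Z + 0 * trace_tensor (theta Gm U) X Y Z.
have wT1 : w1_tensor T1 by apply: w1_comb; exact: w1_trace_tensor.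
have thT1 Z : theta Gm T1 Z = theta Gm U Z.
  by rewrite theta_comb theta_trace_tensor // mulrA m3_coefK; ring.
exists T1, (m3 Phi Gm U), (m2 Phi T); split.
- split.
    apply: W11_of_twist => // X Y Z; rewrite /twist /T1.
    by have := twist_trace_tensor tf X Y Z; rewrite /twist => ->; ring.
  by move=> X Y Z; rewrite m3E (eq_trace_tensor thT1) /T1; ring.
- by exists U; split => //; exists T; split => //; exact/W1P.
- by exists T; split => //; exact/W1P.
- by move=> X Y Z; rewrite /tadd3 m3E /T1 /U /m1 /m2; field; exact: double_pred_neq0.
Qed.

Lemma W1_direct T1 T2 T3 S1 S2 S3 :
  P1 T1 -> P2 T2 -> P3 T3 -> P1 S1 -> P2 S2 -> P3 S3 ->
  teq (tadd3 T1 T2 T3) (tadd3 S1 S2 S3) -> [/\ teq T1 S1, teq T2 S2 & teq T3 S3].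
Proof.
move=> HT1 HT2 HT3 HS1 HS2 HS3 e.
have [[_ tT1] [_ tS1]] := (F1_props HT1, F1_props HS1).
have [[_ tT2 thT2] [_ tS2 thS2]] := (F2_props HT2, F2_props HS2).
have [[_ tT3] [_ tS3]] := (F3_props HT3, F3_props HS3).
(* the twist acts by [-1] on [F_1 + F_2] and by [1] on [F_3] *)
have e3 : teq T3 S3.
  move=> X Y Z; have := e (X *m Phi) Y (Z *m Phi); have := e X Y Z.
  have := (tT1 X Y Z, tT2 X Y Z, tT3 X Y Z, tS1 X Y Z, tS2 X Y Z, tS3 X Y Z).
  rewrite /twist /tadd3 => [[[[[[-> ->] ->] ->] ->] ->]]; lra.
have e12 : teq (fun X Y Z => 1 * T1 X Y Z + 1 * T2 X Y Z) (fun X Y Z => 1 * S1 X Y Z + 1 * S2 X Y Z).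
  by move=> X Y Z; have := e X Y Z; rewrite /tadd3 e3; lra.
have e1 : teq T1 S1.
  move=> X Y Z; rewrite (F1_trace HT1) (F1_trace HS1); congr (_ * _).
  apply: eq_trace_tensor => W; have := eq_theta Gm W e12.
  by rewrite !theta_comb thT2 thS2 !mul1r !addr0.
by split=> // X Y Z; have := e12 X Y Z; rewrite e1; lra.
Qed.

Lemma F1_F2_orthogonal T1 T2 : P1 T1 -> P2 T2 -> tip Gm T1 T2 = 0.
Proof.
move=> H1 H2; have [w1 _] := F1_props H1; have [w2 t2 th2] := F2_props H2.
rewrite (eq_tip Gm (F1_trace H1) (fun _ _ _ => erefl)) tipZl.
by rewrite tip_trace_tensor ?mulr0 //; exact: horizontal_form_theta.
Qed.

Lemma F1_F3_orthogonal T1 T3 : P1 T1 -> P3 T3 -> tip Gm T1 T3 = 0.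
Proof.
move=> /F1_props [[L1 _ _ _] t1] /F3_props [[L3 _ _ _] t3].
exact: tip_twist_eigen.
Qed.

Lemma F2_F3_orthogonal T2 T3 : P2 T2 -> P3 T3 -> tip Gm T2 T3 = 0.
Proof.
move=> /F2_props [[L2 _ _ _] t2 _] /F3_props [[L3 _ _ _] t3].
exact: tip_twist_eigen.
Qed.

Lemma W11_gact A T : inG Phi xi eta Gm A -> P11 T -> P11 (gact A T).
Proof.
move=> A_G [S [/W1P wS e]]; exists (gact A S); split; first exact/W1P/w1_gact.
by move=> X Y Z; rewrite m1_gact //; apply: e.
Qed.

Lemma F_gact A T : inG Phi xi eta Gm A ->
  [/\ P1 T -> P1 (gact A T), P2 T -> P2 (gact A T) & P3 T -> P3 (gact A T)].
Proof.
move=> A_G; split.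
- case=> W e; split; first exact: W11_gact.
  have [[LT _ _ _] _] := W11_props W.
  by move=> X Y Z; rewrite m3_gact //; apply: e.
- case=> S [W e]; exists (gact A S); split; first exact: W11_gact.
  have [[LS _ _ _] _] := W11_props W.
  by move=> X Y Z; rewrite m3_gact //; apply: e.
- case=> S [/W1P wS e]; exists (gact A S); split; first exact/W1P/w1_gact.
  by move=> X Y Z; rewrite m2_gact //; apply: e.
Qed.

End Structure.
Unset Implicit Arguments.

Theorem proposition3p4 (R : realType) (n : nat)
    (Phi : 'M[R]_(n.*2.+1)) (xi : 'rV[R]_(n.*2.+1)) (eta : 'cV[R]_(n.*2.+1))
    (Gm : 'M[R]_(n.*2.+1)) (E : 'M[R]_(n.*2, n.*2.+1)) :
  (2 <= n)%N ->
  apc_struct Phi xi eta Gm ->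
  is_basis_D E eta ->
  let P1 := F1 Phi xi eta Gm E in
  let P2 := F2 Phi xi eta Gm E in
  let P3 := F3 Phi xi eta Gm E in
      (forall T, W1 Phi xi eta Gm E T <->
         exists T1 T2 T3, [/\ P1 T1, P2 T2, P3 T3 & teq T (tadd3 T1 T2 T3)]) /\
      (forall T1 T2 T3 S1 S2 S3, P1 T1 -> P2 T2 -> P3 T3 -> P1 S1 -> P2 S2 -> P3 S3 ->
         teq (tadd3 T1 T2 T3) (tadd3 S1 S2 S3) -> [/\ teq T1 S1, teq T2 S2 & teq T3 S3]) /\
      (forall T1 T2, P1 T1 -> P2 T2 -> tip Gm T1 T2 = 0) /\
      (forall T1 T3, P1 T1 -> P3 T3 -> tip Gm T1 T3 = 0) /\
      (forall T2 T3, P2 T2 -> P3 T3 -> tip Gm T2 T3 = 0) /\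
      (forall A T, inG Phi xi eta Gm A ->
         [/\ P1 T -> P1 (gact A T), P2 T -> P2 (gact A T) & P3 T -> P3 (gact A T)]).
Proof.
move=> n_ge2 [Phi_xi [eta_Phi [eta_xi [Phi_sq [_ [_ [Gm_sym [Gm_unit g_Phi]]]]]]]].
move=> /andP [_ E_ker] P1 P2 P3.
split; first by move=> T; apply: W1_decompose.
split; first by move=> *; apply: W1_direct; eassumption.
split; first by move=> *; apply: F1_F2_orthogonal; eassumption.
split; first by move=> *; apply: F1_F3_orthogonal; eassumption.
split; first by move=> *; apply: F2_F3_orthogonal; eassumption.
by move=> A T A_G; apply: F_gact.
Qed.
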